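(* Let $f$ be a $C^\infty$ function near $0\in\mathbb R^n$ with $\Gamma_+(f)\ne\emptyset$, let $\Sigma$ be a simplicial subdivision of the fan $\Sigma_0$ associated with $\Gamma_+(f)$, and for each $n$-dimensional cone $\sigma\in\Sigma^{(n)}$ with skeleton $a^1(\sigma),\dots,a^n(\sigma)$ set $$A(\sigma)=\Big\{j\in\{1,\dots,n\}:\ l(a^j(\sigma))\ne0,\ -\frac{\langle a^j(\sigma)\rangle}{l(a^j(\sigma))}=-\frac1{d(f)}\Big\}.$$ Then $m(f)=\max\{\#A(\sigma):\sigma\in\Sigma^{(n)}\}$.
   Context: $\langle a\rangle=a_1+\dots+a_n$; $H(a,l)=\{x:\langle a,x\rangle=l\}$. Newton polyhedron $\Gamma_+(f)$: convex hull of $\bigcup\{\alpha+\mathbb R_+^n:c_\alpha\ne0\}$, $c_\alpha$ Taylor coefficients of $f$ at $0$. $d(f)$: $(d(f),\dots,d(f))$ is where the diagonal meets $\partial\Gamma_+(f)$; principal face $\tau_*$: face of $\Gamma_+(f)$ whose relative interior contains that point; $m(f)=n-\dim\tau_*$. Fan: with $P=\Gamma_+(f)$, $l(a)=\min\{\langle a,\alpha\rangle:\alpha\in P\}$ for $a\in\mathbb R_+^n$. For each face $\gamma$ of $P$, $\gamma^*=\{a\in\mathbb R_+^n:H(a,l(a))\cap P=\gamma\}$; closures of the $\gamma^*$ form the fan $\Sigma_0$ (support $\mathbb R_+^n$). A simplicial subdivision $\Sigma$ is a fan with the same support, each cone lying in a cone of $\Sigma_0$, whose every cone's skeleton (primitive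 integer vectors on its edges) can be completed to a basis of $\mathbb Z^n$. $\Sigma^{(n)}$ is the set of $n$-dimensional cones; the skeleton of $\sigma\in\Sigma^{(n)}$ consists of $n$ vectors $a^1(\sigma),\dots,a^n(\sigma)\in\mathbb Z_+^n$. *)

From HB Require Import structures.
From mathcomp Require Import all_boot all_order all_algebra.
Set Implicit Arguments. Unset Strict Implicit. Unset Printing Implicit Defensive.
Import Order.TTheory GRing.Theory Num.Theory.
Local Open Scope ring_scope.

Section NewtonDefs.
Variables (R : realFieldType) (n : nat).

Definition pt := 'rV[R]_n.

Definition dotv (a x : pt) : R := \sum_(i < n) a ord0 i * x ord0 i.
(* <a> = a_1 + ... + a_n *)
Definition sumv (a : pt) : R := \sum_(i < n) a ord0 i.

Definition near_pt (e : R) (x y : pt) : Prop :=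
  forall i : 'I_n, `|y ord0 i - x ord0 i| < e.

Definition closure (A : pt -> Prop) (x : pt) : Prop :=
  forall e, 0 < e -> exists y, A y /\ near_pt e x y.

Definition on_boundary (A : pt -> Prop) (x : pt) : Prop :=
  (forall e, 0 < e -> exists y, A y /\ near_pt e x y) /\
  (forall e, 0 < e -> exists y, ~ A y /\ near_pt e x y).

Definition conv (A : pt -> Prop) (x : pt) : Prop :=
  exists (m : nat) (lam : 'I_m -> R) (p : 'I_m -> pt),
    (forall k, 0 <= lam k) /\ \sum_(k < m) lam k = 1 /\
    (forall k, A (p k)) /\ x = \sum_(k < m) lam k *: p k.

Definition in_aff (A : pt -> Prop) (x : pt) : Prop :=
  exists (m : nat) (mu : 'I_m -> R) (p : 'I_m -> pt),
    \sum_(k < m) mu k = 1 /\ (forall k, A (p k)) /\ x = \sum_(k < m) mu k *: p k.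

Definition relint (A : pt -> Prop) (x : pt) : Prop :=
  A x /\ exists e, 0 < e /\ forall y, in_aff A y -> near_pt e x y -> A y.

Definition aff_dim (A : pt -> Prop) (k : nat) : Prop :=
  exists x0 : pt, A x0 /\
  exists V : 'M[R]_(k, n), row_free V /\ (forall i, A (x0 + row i V)) /\
    (forall x, A x -> (x - x0 <= V)%MS).

(* nonempty face of a closed convex set C : intersection with a supporting
   hyperplane (C itself is obtained with a = 0) *)
Definition is_face (C gam : pt -> Prop) : Prop :=
  (exists x, gam x) /\
  exists (a : pt) (t : R), (forall x, C x -> t <= dotv a x) /\
    (forall x, gam x <-> (C x /\ dotv a x = t)).

Definition expo (alpha : 'I_n -> nat) : pt := \row_i (alpha i)%:R.

(* Newton polyhedron of a function whose Taylor support at 0 is S: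
   convex hull of the union of alpha + R_+^n, alpha in S *)
Definition newton (S : ('I_n -> nat) -> Prop) : pt -> Prop :=
  conv (fun y => exists alpha, S alpha /\
                  forall i, expo alpha ord0 i <= y ord0 i).

Definition nonneg (a : pt) : Prop := forall i, 0 <= a ord0 i.

Definition lmin (S : ('I_n -> nat) -> Prop) (a : pt) (t : R) : Prop :=
  (exists x, newton S x /\ dotv a x = t) /\
  (forall x, newton S x -> t <= dotv a x).

Definition dual_cone (S : ('I_n -> nat) -> Prop) (gam : pt -> Prop) (a : pt)
  : Prop :=
  nonneg a /\ exists t, lmin S a t /\
    (forall x, (newton S x /\ dotv a x = t) <-> gam x).

Definition diag (d : R) : pt := const_mx d.

Definition is_dnum (S : ('I_n -> nat) -> Prop) (d : R) : Prop :=
  on_boundary (newton S) (diag d).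

Definition principal_face (S : ('I_n -> nat) -> Prop) (d : R)
  (tau : pt -> Prop) : Prop :=
  is_face (newton S) tau /\ relint tau (diag d).

Definition intpt (a : 'rV[int]_n) : pt := map_mx (fun z : int => z%:~R) a.

Definition cone_of (s : seq 'rV[int]_n) (x : pt) : Prop :=
  exists c : 'I_(size s) -> R, (forall j, 0 <= c j) /\
    x = \sum_(j < size s) c j *: intpt (nth 0 s j).

Definition completes_to_basis (s : seq 'rV[int]_n) : Prop :=
  exists (M : 'M[int]_n) (f : 'I_(size s) -> 'I_n),
    M \in unitmx /\ injective f /\ forall j, row (f j) M = nth 0 s j.

Definition same_set (A B : pt -> Prop) : Prop := forall x, A x <-> B x.

Definition is_fan (Sig : seq (seq 'rV[int]_n)) : Prop :=
  (forall s, s \in Sig -> forall gam, is_face (cone_of s) gam ->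
     exists2 s', s' \in Sig & same_set (cone_of s') gam) /\
  (forall s s', s \in Sig -> s' \in Sig ->
     is_face (cone_of s) (fun x => cone_of s x /\ cone_of s' x) /\
     is_face (cone_of s') (fun x => cone_of s x /\ cone_of s' x)).

Definition simplicial_subdivision (S : ('I_n -> nat) -> Prop)
  (Sig : seq (seq 'rV[int]_n)) : Prop :=
  is_fan Sig /\
  (forall x, nonneg x <-> exists2 s, s \in Sig & cone_of s x) /\
  (forall s, s \in Sig -> exists gam, is_face (newton S) gam /\
      forall x, cone_of s x -> closure (dual_cone S gam) x) /\
  (forall s, s \in Sig -> completes_to_basis s).

Definition inA (S : ('I_n -> nat) -> Prop) (d : R) (a : 'rV[int]_n) : Prop :=
  exists t, lmin S (intpt a) t /\ t != 0 /\
    - (sumv (intpt a)) / t = - (1 / d).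

Definition cardA (S : ('I_n -> nat) -> Prop) (d : R) (s : seq 'rV[int]_n)
  (k : nat) : Prop :=
  exists A : {set 'I_(size s)},
    (forall j, j \in A <-> inA S d (nth 0 s j)) /\ #|A| = k.

Definition top_cone (Sig : seq (seq 'rV[int]_n)) (s : seq 'rV[int]_n) : Prop :=
  s \in Sig /\ aff_dim (cone_of s) n.

Definition is_max_cardA (S : ('I_n -> nat) -> Prop) (d : R)
  (Sig : seq (seq 'rV[int]_n)) (m : nat) : Prop :=
  (exists s, top_cone Sig s /\ cardA S d s m) /\
  (forall s k, top_cone Sig s -> cardA S d s k -> (k <= m)%N).

End NewtonDefs.

From HB Require Import structures.
From mathcomp Require Import all_boot all_order all_algebra.
From mathcomp Require Import ring lra zify.
From Stdlib Require Import Classical ClassicalEpsilon FunctionalExtensionality.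
Set Implicit Arguments. Unset Strict Implicit. Unset Printing Implicit Defensive.
Import Order.TTheory GRing.Theory Num.Theory.
Local Open Scope ring_scope.

(* Let p0 = (d,...,d) and call b principal when <b,_> attains its minimum
   over the Newton polyhedron at p0.  A ray a of a cone of the subdivision
   is nonnegative and nonzero, and a belongs to A(sigma) exactly when a is
   principal (then l(a) = <a,p0> = d<a>).
   Upper bound: since p0 lies in the relative interior of the principal face
   tau, a principal b is constant on tau, i.e. orthogonal to the direction
   space V of tau.  Linearly independent principal vectors thus span a space
   meeting V trivially, so there are at most n - dim tau of them; skeletons
   being linearly independent, #A(sigma) <= n - k.
   Lower bound: if <a0,_> cuts out tau, every small perturbation a0 + w with
   w orthogonal to V is still nonnegative and principal, and a principal
   vector in a cone lies in the span of the principal rays of that cone.  A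
   generic such perturbation forces this span to contain the whole
   orthogonal complement of V, giving a cone with n - k independent
   principal rays; an n-dimensional cone containing their sum contains them
   all (fan axiom), and so realises the bound. *)

Section DotProduct.
Variables (R : realFieldType) (n : nat).
Implicit Types (a x y : 'rV[R]_n).

Lemma dotvE a x : dotv a x = (a *m x^T) 0 0.
Proof. by rewrite /dotv !mxE; apply: eq_bigr => i _; rewrite !mxE. Qed.

Lemma dotvC a x : dotv a x = dotv x a.
Proof. by apply: eq_bigr => i _; rewrite mulrC. Qed.

Lemma dotvDr a x y : dotv a (x + y) = dotv a x + dotv a y.
Proof. by rewrite /dotv -big_split; apply: eq_bigr => i _; rewrite mxE mulrDr. Qed.

Lemma dotvDl a x y : dotv (x + y) a = dotv x a + dotv y a.
Proof. by rewrite dotvC dotvDr !(dotvC a). Qed.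

Lemma dotvZr c a x : dotv a (c *: x) = c * dotv a x.
Proof. by rewrite /dotv mulr_sumr; apply: eq_bigr => i _; rewrite mxE mulrCA. Qed.

Lemma dotvZl c a x : dotv (c *: a) x = c * dotv a x.
Proof. by rewrite dotvC dotvZr dotvC. Qed.

Lemma dotvBr a x y : dotv a (x - y) = dotv a x - dotv a y.
Proof. by rewrite dotvDr -scaleN1r dotvZr mulN1r. Qed.

Lemma dotvBl a x y : dotv (x - y) a = dotv x a - dotv y a.
Proof. by rewrite dotvC dotvBr !(dotvC a). Qed.

Lemma dotv0l a : dotv 0 a = 0.
Proof. by rewrite /dotv big1 // => i _; rewrite mxE mul0r. Qed.

Lemma dotv_sumr I (r : seq I) (P : pred I) (F : I -> 'rV[R]_n) a :
  dotv a (\sum_(i <- r | P i) F i) = \sum_(i <- r | P i) dotv a (F i).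
Proof.
elim/big_rec2: _ => [|i y1 y2 _ <-]; last by rewrite dotvDr.
by rewrite dotvC dotv0l.
Qed.

Lemma dotv_suml I (r : seq I) (P : pred I) (F : I -> 'rV[R]_n) a :
  dotv (\sum_(i <- r | P i) F i) a = \sum_(i <- r | P i) dotv (F i) a.
Proof. by rewrite dotvC dotv_sumr; apply: eq_bigr => i _; rewrite dotvC. Qed.

Lemma dotv_delta a i : dotv a (delta_mx ord0 i) = a ord0 i.
Proof.
rewrite /dotv (bigD1 i) //= big1 ?addr0 => [|j hj]; first by rewrite mxE !eqxx mulr1.
by rewrite mxE (negbTE hj) andbF mulr0.
Qed.

Lemma mulmx_dotv p (z : 'rV[R]_n) (C : 'M[R]_(n, p)) j :
  (z *m C) ord0 j = dotv z (col j C)^T.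
Proof. by rewrite dotvE !mxE; apply: eq_bigr => i _; rewrite !mxE. Qed.

Lemma dotv_self_eq0 x : dotv x x = 0 -> x = 0.
Proof.
move=> /psumr_eq0P h; apply/matrixP => i j; rewrite (ord1 i) [RHS]mxE.
apply/eqP; rewrite -sqrf_eq0; apply/eqP; rewrite expr2 h // => l _.
by rewrite -expr2 sqr_ge0.
Qed.

Definition l1 x : R := \sum_(i < n) `|x ord0 i|.

Lemma l1_ge0 x : 0 <= l1 x.
Proof. exact: sumr_ge0. Qed.

Lemma coord_le_l1 x i : `|x ord0 i| <= l1 x.
Proof. by rewrite /l1 (bigD1 i) //= lerDl; exact: sumr_ge0. Qed.

Lemma dotv_near a b x e : 0 <= e -> near_pt e a b ->
  `|dotv b x - dotv a x| <= e * l1 x.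
Proof.
move=> he hab; rewrite -dotvBl /l1 mulr_sumr.
apply: le_trans (ler_norm_sum _ _ _) _; apply: ler_sum => i _.
by rewrite normrM !mxE; apply: ler_wpM2r => //; exact: ltW (hab i).
Qed.

End DotProduct.

Section Neighbourhoods.
Variable R : realFieldType.

Lemma small_mul (D K : R) : 0 < D -> 0 <= K ->
  exists2 e, 0 < e & forall e', 0 < e' -> e' <= e -> e' * K < D.
Proof.
move=> D0 K0; exists (D / (K + 1)); first by rewrite divr_gt0 // ltr_wpDl.
move=> e' _ he'; apply: le_lt_trans (ler_wpM2r K0 he') _.
by rewrite mulrAC ltr_pdivrMr ?ltr_wpDl // ltr_pM2l // ltrDl.
Qed.

Lemma uniform_threshold (T : eqType) (l : seq T) (P : T -> R -> Prop) :
  (forall x, x \in l -> exists2 e, 0 < e & forall e', 0 < e' -> e' <= e -> P x e') ->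
  exists2 e, 0 < e & forall x, x \in l -> forall e', 0 < e' -> e' <= e -> P x e'.
Proof.
elim: l => [|x l IH] h; first by exists 1.
have [e1 e10 he1] := h x (mem_head _ _).
have := IH; case=> [y hy|e2 e20 he2]; first by apply: h; rewrite in_cons hy orbT.
exists (Num.min e1 e2); first by rewrite lt_min e10 e20.
move=> y; rewrite in_cons => /orP [/eqP ->|hy] e' e'0 he'.
  by apply: he1 => //; apply: le_trans he' _; rewrite ge_min lexx.
by apply: he2 => //; apply: le_trans he' _; rewrite ge_min lexx orbT.
Qed.

Lemma near_mono m (x y : 'rV[R]_m) e e' : e' <= e -> near_pt e' x y -> near_pt e x y.
Proof. by move=> h hn i; exact: lt_le_trans (hn i) h. Qed.

Lemma near_shrink m (c y : 'rV[R]_m) e : near_pt e c y ->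
  exists2 dl, 0 < dl & forall z, near_pt dl y z -> near_pt e c z.
Proof.
move=> h.
have := @uniform_threshold _ (enum 'I_m) (fun i dl => forall z : 'rV[R]_m,
  `|z ord0 i - y ord0 i| < dl -> `|z ord0 i - c ord0 i| < e).
case=> [i _|dl dl0 hdl].
  exists (e - `|y ord0 i - c ord0 i|); first by rewrite subr_gt0.
  move=> e' _ he' z hz; have := ler_distD (y ord0 i) (z ord0 i) (c ord0 i).
  by move: (h i) he' hz; rewrite distrC; lra.
by exists dl => // z hz i; exact: (hdl i (mem_enum _ _) dl dl0 (lexx _) z (hz i)).
Qed.

Lemma mulmx_near m p (W : 'M[R]_(m, p)) eta : 0 < eta ->
  exists2 rho, 0 < rho & forall u : 'rV[R]_m, near_pt rho 0 u -> near_pt eta 0 (u *m W).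
Proof.
move=> eta0; have := @uniform_threshold _ (enum 'I_p)
  (fun j rho => rho * l1 (col j W)^T < eta).
case=> [j _|rho rho0 hrho]; first exact: small_mul (l1_ge0 _).
exists rho => // u hu j; rewrite [(0 : 'rV[R]_p) ord0 j]mxE subr0 mulmx_dotv.
have := dotv_near (col j W)^T (ltW rho0) hu; rewrite dotv0l subr0 => h.
exact: le_lt_trans h (hrho j (mem_enum _ _) rho rho0 (lexx _)).
Qed.

Lemma notin_open m p (K : 'M[R]_(p, m)) y : ~~ (y <= K)%MS ->
  exists2 e, 0 < e & forall z, near_pt e y z -> ~~ (z <= K)%MS.
Proof.
rewrite submxE => /eqP hy.
have [j hj] : exists j, (y *m cokermx K) ord0 j != 0.
  apply/existsP; apply: contraT; rewrite negb_exists => /forallP h.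
  by case: hy; apply/rowP => j; rewrite [RHS]mxE; apply/eqP/negPn/h.
set x := (col j (cokermx K))^T.
have D0 : 0 < `|(y *m cokermx K) ord0 j| by rewrite normr_gt0.
have [e e0 he] := small_mul D0 (l1_ge0 x).
exists e => // z hz; rewrite submxE; apply/eqP => hz0.
have := dotv_near x (ltW e0) hz; rewrite -!mulmx_dotv hz0 mxE sub0r normrN.
by have := he e e0 (lexx _); move: (e * l1 x) => E; lra.
Qed.

Lemma leave_subspace m (K : 'M[R]_m) (y : 'rV[R]_m) dl : 0 < dl ->
  (\rank K < m)%N -> exists z, near_pt dl y z /\ ~~ (z <= K)%MS.
Proof.
move=> dl0 hK.
case hyK : (y <= K)%MS; last first.
  by exists y; split=> [i|]; [rewrite subrr normr0 | rewrite hyK].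
have [i hi] : exists i, ~~ ((delta_mx 0 i : 'rV[R]_m) <= K)%MS.
  apply/existsP; apply: contraT; rewrite negb_exists => /forallP hall.
  have h1 : (1%:M <= K)%MS.
    by apply/row_subP => i; rewrite row1; apply/negPn/hall.
  by have := mxrankS h1; rewrite mxrank1 leqNgt hK.
have h2 : 0 < dl / 2 by rewrite divr_gt0.
exists (y + (dl / 2) *: delta_mx 0 i); split.
  move=> j; rewrite !mxE addrAC subrr add0r normrM gtr0_norm //=.
  by case: (j == i) => /=; rewrite ?normr1 ?normr0 ?mulr1 ?mulr0; lra.
apply: contra hi => hzK.
have : ((y + (dl / 2) *: delta_mx 0 i) - y <= K)%MS.
  by apply: addmx_sub => //; rewrite eqmx_opp.
rewrite addrC addKr => /(scalemx_sub (dl / 2)^-1).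
by rewrite scalerA mulVf ?scale1r // gt_eqF.
Qed.

Lemma avoid m (Ks : seq 'M[R]_m) (c : 'rV[R]_m) e : 0 < e ->
  (forall K, K \in Ks -> (\rank K < m)%N) ->
  exists y, near_pt e c y /\ forall K, K \in Ks -> ~~ (y <= K)%MS.
Proof.
move=> e0; elim: Ks => [|K Ks IH] hK.
  by exists c; split=> // i; rewrite subrr normr0.
have := IH; case=> [K' hK'|y1 [hy1 hav]]; first by apply: hK; rewrite in_cons hK' orbT.
have [d1 d10 hd1] := near_shrink hy1.
have := @uniform_threshold _ Ks
  (fun K' dl => forall z, near_pt dl y1 z -> ~~ (z <= K')%MS).
case=> [K' hK'|d2 d20 hd2].
  have [dl dl0 hdl] := notin_open (hav K' hK').
  by exists dl => // e' _ he' z hz; apply: hdl; exact: near_mono he' hz.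
have dl0 : 0 < Num.min d1 d2 by rewrite lt_min d10 d20.
have [z [hz hzK]] := leave_subspace y1 dl0 (hK K (mem_head _ _)).
exists z; split; first by apply: hd1; apply: near_mono hz; rewrite ge_min lexx.
move=> K'; rewrite in_cons => /orP [/eqP -> //|hK'].
by apply: (hd2 K' hK' _ dl0 _ z hz); rewrite ge_min lexx orbT.
Qed.

End Neighbourhoods.

Section NewtonPolyhedron.
Variables (R : realFieldType) (n : nat) (S : ('I_n -> nat) -> Prop).

Lemma sum_coord m (lam : 'I_m -> R) (p : 'I_m -> 'rV[R]_n) i :
  (\sum_(k < m) lam k *: p k) ord0 i = \sum_(k < m) lam k * p k ord0 i.
Proof. by rewrite summxE; apply: eq_bigr => k _; rewrite mxE. Qed.

Lemma expo_ge0 (alpha : 'I_n -> nat) i : 0 <= expo R alpha ord0 i.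
Proof. by rewrite mxE. Qed.

Lemma newton_up (x u : 'rV[R]_n) : newton S x -> nonneg u -> newton S (x + u).
Proof.
case=> m [lam [p [hl [h1 [hp ->]]]]] hu.
exists m, lam, (fun k => p k + u); split=> //; split=> //; split.
  move=> k; have [al [Sal hal]] := hp k; exists al; split=> // i.
  rewrite [X in _ <= X]mxE -[X in X <= _]addr0; apply: lerD; [exact: hal|exact: hu].
rewrite -[X in _ + X]scale1r -h1 scaler_suml -big_split /=.
by apply: eq_bigr => k _; rewrite scalerDr.
Qed.

Lemma newton0 : ~ S (fun _ => 0%N) -> ~ newton S (0 : 'rV[R]_n).
Proof.
move=> HS0 [m [lam [p [hl [h1 [hp h0]]]]]].
have [k hk] : exists k, lam k != 0.
  apply/existsP; apply: contraT; rewrite negb_exists => /forallP h.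
  by move: h1; rewrite big1 => [/esym/eqP|k _]; [rewrite oner_eq0 | apply/eqP/negPn].
have [al [Sal hal]] := hp k; apply: HS0.
suff -> : (fun _ : 'I_n => 0%N) = al by [].
apply: functional_extensionality => i; apply/esym/eqP.
have hpos j : 0 <= lam j * p j ord0 i.
  have [al' [_ hal']] := hp j.
  by apply: mulr_ge0 => //; exact: le_trans (expo_ge0 _ _) (hal' i).
have hs : \sum_(j < m) lam j * p j ord0 i = 0 by rewrite -sum_coord -h0 mxE.
have : lam k * p k ord0 i == 0.
  move/eqP: hs; rewrite (bigD1 k) //= paddr_eq0 ?hpos ?sumr_ge0 //.
  by case/andP.
rewrite mulf_eq0 (negbTE hk) /= => /eqP hpk.
by have := hal i; rewrite hpk mxE lern0.
Qed.

End NewtonPolyhedron.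

Lemma rowsub_free (F : fieldType) m p q (f : 'I_m -> 'I_p) (A : 'M[F]_(p, q)) :
  injective f -> row_free A -> row_free (rowsub f A).
Proof.
move=> fi /row_freeP [B hB]; apply/row_freeP.
exists (B *m (rowsub f 1%:M)^T); rewrite mulmxA mul_rowsub_mx hB.
apply/matrixP => i j; rewrite !mxE (bigD1 (f i)) //= big1 => [|l hl].
  by rewrite !mxE eqxx (inj_eq fi) mul1r addr0 eq_sym.
by rewrite !mxE eq_sym (negbTE hl) mul0r.
Qed.

(* The truth value of a proposition, used to form the finite set of
   rays satisfying a non-decidable property. *)
Definition classicb (P : Prop) : bool :=
  if excluded_middle_informative P then true else false.

Lemma classicbP (P : Prop) : classicb P <-> P.
Proof. by rewrite /classicb; case: excluded_middle_informative. Qed.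

Section Fan.
Variables (R : realFieldType) (n : nat) (S : ('I_n -> nat) -> Prop).
Variable Sig : seq (seq 'rV[int]_n).
Hypothesis HSig : simplicial_subdivision R S Sig.
Implicit Types (s : seq 'rV[int]_n) (x : 'rV[R]_n).

Definition skel s : 'M[R]_(size s, n) :=
  \matrix_(j < size s, l < n) intpt R (nth 0 s j) ord0 l.

Lemma row_skel s j : row j (skel s) = intpt R (nth 0 s j).
Proof. by apply/rowP => l; rewrite !mxE. Qed.

Lemma cone_ofE s x : cone_of s x <->
  exists c : 'rV[R]_(size s), (forall j, 0 <= c ord0 j) /\ x = c *m skel s.
Proof.
split.
  case=> c [hc ->]; exists (\row_j c j); split; first by move=> j; rewrite mxE.
  by rewrite mulmx_sum_row; apply: eq_bigr => j _; rewrite mxE row_skel.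
case=> c [hc ->]; exists (fun j => c ord0 j); split=> //.
by rewrite mulmx_sum_row; apply: eq_bigr => j _; rewrite row_skel.
Qed.

Lemma ray_cone s (j : 'I_(size s)) : cone_of s (intpt R (nth 0 s j)).
Proof.
apply/cone_ofE; exists (delta_mx 0 j); split; first by move=> l; rewrite mxE ler0n.
by rewrite -rowE row_skel.
Qed.

(* A skeleton extends to a basis of Z^n, so it is linearly independent. *)
Lemma skel_free s : s \in Sig -> row_free (skel s).
Proof.
move=> hs; case: HSig => _ [_ [_ hb]]; have [M [f [hM [fi hf]]]] := hb s hs.
have -> : skel s = rowsub f (map_mx (fun z : int => z%:~R : R) M).
  by apply/matrixP => j l; rewrite !mxE -hf !mxE.
apply: rowsub_free => //; rewrite row_free_unit unitmxE det_map_mx unitfE.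
rewrite intr_eq0; apply: contraTneq hM; rewrite unitmxE => ->; by rewrite unitr0.
Qed.

Lemma cone_nonneg s x : s \in Sig -> cone_of s x -> nonneg x.
Proof. by move=> hs hx; case: HSig => _ [hc _]; apply/hc; exists s. Qed.

Lemma ray_neq0 s (j : 'I_(size s)) : s \in Sig -> intpt R (nth 0 s j) != 0.
Proof.
move=> hs; apply/eqP => h.
have := row_free_inj (skel_free hs) (_ : (delta_mx 0 j : 'rV[R]_(size s)) *m skel s = 0 *m skel s).
rewrite -rowE row_skel h mul0mx => /(_ erefl) /matrixP /(_ 0 j).
by rewrite !mxE !eqxx => /eqP; rewrite oner_eq0.
Qed.

(* All vectors of a cone of Sigma attain their minimum over the Newton
   polyhedron at a common point g: the cone lies in the closure of the
   dual cone of a face, and g is any point of that face. *)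
Lemma common_vertex s : s \in Sig -> exists g, newton S g /\
  forall b, cone_of s b -> forall x, newton S x -> dotv b g <= dotv b x.
Proof.
move=> hs; case: HSig => _ [_ [hcl _]].
have [gam [[[g hg] [a [t0 [_ hgam]]]] hsub]] := hcl s hs.
have gN : newton S g by case/hgam: hg.
exists g; split=> // b hb x hx; rewrite leNgt; apply/negP => hlt.
have D0 : 0 < dotv b g - dotv b x by rewrite subr_gt0.
have [e e0 he] := small_mul D0 (l1_ge0 (x - g)).
have [c [[_ [t [[_ hmin] hc]]] hnear]] := hsub b hb e e0.
have [_ hcg] := (hc g).2 hg.
have := dotv_near (x - g) (ltW e0) hnear; rewrite !dotvBr hcg ler_norml.
have := hmin x hx; have := he e e0 (lexx _).
by move: (e * l1 (x - g)) => E; lra.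
Qed.

Lemma cone_closed s (p : 'rV[R]_n) : s \in Sig -> \rank (skel s) = n ->
  ~ cone_of s p -> exists2 dl, 0 < dl & forall z, near_pt dl p z -> ~ cone_of s z.
Proof.
move=> hs hr hnp.
set C := pinvmx (skel s).
have hpA : (p <= skel s)%MS by rewrite submx_full // /row_full hr.
set u := p *m C.
have [j hj] : exists j, u ord0 j < 0.
  apply/existsP; apply: contraT; rewrite negb_exists => /forallP hall.
  case: hnp; apply/cone_ofE; exists u; split; last by rewrite mulmxKpV.
  by move=> j; have := hall j; rewrite -leNgt.
set x := (col j C)^T.
have D0 : 0 < - u ord0 j by rewrite oppr_gt0.
have [e e0 he] := small_mul D0 (l1_ge0 x).
exists e => // z hz /cone_ofE [c [hc hze]].
have hzc : z *m C = c by rewrite hze mulmxKp //; exact: skel_free.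
have := dotv_near x (ltW e0) hz; rewrite -!mulmx_dotv hzc -/u ler_norml.
have := hc j; have := he e e0 (lexx _).
by move: (e * l1 x) => E; lra.
Qed.

(* The n-dimensional cones of Sigma cover R_+^n: the lower-dimensional
   cones lie in finitely many proper subspaces, which cannot cover a
   neighbourhood of p in the interior of R_+^n, and the union of the
   closed n-dimensional cones not containing p misses a neighbourhood. *)
Lemma top_cover (p : 'rV[R]_n) : nonneg p ->
  exists s, [/\ s \in Sig, \rank (skel s) = n & cone_of s p].
Proof.
move=> hp; apply: NNPP => hno.
have := @uniform_threshold R _ Sig (fun s dl => (\rank (skel s) < n)%N \/
   forall z, near_pt dl p z -> ~ cone_of s z).
case=> [s hs|dl dl0 hdl].
  have := rank_leq_col (skel s); rewrite leq_eqVlt => /orP [/eqP hr|hr].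
    have [e e0 he] := cone_closed hs hr (fun hc => hno (ex_intro _ s (And3 hs hr hc))).
    by exists e => // e' _ he'; right => z hz; apply: he; exact: near_mono he' hz.
  by exists 1 => // e' _ _; left.
have dl20 : 0 < dl / 2 by rewrite divr_gt0.
have := @avoid R n [seq <<skel s>>%MS | s <- Sig & (\rank (skel s) < n)%N]
   (p + const_mx (dl / 2)) (dl / 2) dl20.
case=> [K /mapP [s]|y [hy hav]].
  by rewrite mem_filter => /andP [hr _] ->; rewrite mxrank_gen.
have hyn : nonneg y.
  by move=> i; have := hy i; have := hp i; rewrite !mxE ltr_norml; lra.
have hyp : near_pt dl p y.
  by move=> i; have := hy i; rewrite !mxE !ltr_norml; lra.
case: HSig => _ [hcov _]; have [s hs hsy] := (hcov _).1 hyn.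
have := hdl s hs dl dl0 (lexx _); case=> [hr|hz]; last exact: hz hyp hsy.
have : (y <= <<skel s>>)%MS.
  by rewrite genmxE; case/cone_ofE: hsy => c [_ ->]; exact: submxMl.
by apply/negP; apply: hav; apply/mapP; exists s => //; rewrite mem_filter hr hs.
Qed.

(* A cone whose skeleton has rank n has affine dimension n: it contains
   a point c0 together with c0 + e_i for every unit vector e_i. *)
Lemma full_rank_cone_dim s : \rank (skel s) = n -> aff_dim (@cone_of R n s) n.
Proof.
move=> hr; set C := pinvmx (skel s).
set c0 : 'rV[R]_(size s) := \row_j \sum_i `|C i j|.
have hc0 j i : 0 <= c0 ord0 j + C i j.
  rewrite mxE (bigD1 i) //=.
  have h1 : 0 <= \sum_(i0 < n | i0 != i) `|C i0 j| by exact: sumr_ge0.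
  have h2 : - C i j <= `|C i j| by rewrite -normrN ler_norm.
  lra.
exists (c0 *m skel s); split.
  by apply/cone_ofE; exists c0; split=> // j; rewrite mxE; exact: sumr_ge0.
exists 1%:M; split; first by rewrite row_free_unit unitmx1.
split; last by move=> x _; exact: submx1.
move=> i; apply/cone_ofE; exists (c0 + row i C); split.
  by move=> j; have := hc0 j i; rewrite !mxE.
rewrite mulmxDl; congr (_ + _).
have h1 : (row i (1%:M : 'M[R]_n) <= skel s)%MS by rewrite submx_full // /row_full hr.
by rewrite -[LHS](mulmxKpV h1) -row_mul mul1mx.
Qed.

Definition ray_sum s (J : {set 'I_(size s)}) : 'rV[R]_n :=
  (\row_l ((l \in J)%:R : R)) *m skel s.

Lemma ray_sum_cone s (J : {set 'I_(size s)}) : cone_of s (ray_sum J).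
Proof.
by apply/cone_ofE; exists (\row_l ((l \in J)%:R : R)); split=> // j; rewrite mxE ler0n.
Qed.

(* If a cone s' of Sigma contains a sum of rays of a cone s, it contains
   each of these rays: s and s' meet in a face of s, cut out by a supporting
   hyperplane through 0 on which the sum, hence each summand, lies. *)
Lemma face_rays s s' (J : {set 'I_(size s)}) : s \in Sig -> s' \in Sig ->
  cone_of s' (ray_sum J) -> forall j, j \in J -> cone_of s' (row j (skel s)).
Proof.
move=> hs hs' hp j hj.
case: HSig => [[_ hfan] _]; have [[_ [a [t [hle hiff]]]] _] := hfan s s' hs hs'.
have ht : dotv a (ray_sum J) = t.
  by have [] := (hiff (ray_sum J)).1 (conj (ray_sum_cone J) hp).
have h0 : t <= 0.
  have := hle 0; rewrite dotvC dotv0l; apply; apply/cone_ofE.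
  by exists 0; split; [move=> l; rewrite mxE | rewrite mul0mx].
have h2 : t <= 2 * t.
  have := hle (2 *: ray_sum J); rewrite dotvZr ht; apply; apply/cone_ofE.
  exists (2 *: \row_l ((l \in J)%:R : R)); split; last by rewrite -scalemxAl.
  by move=> l; rewrite !mxE mulr_ge0 // ler0n.
have hr := hle _ (ray_cone j); rewrite -row_skel in hr.
have hd : t <= dotv a (ray_sum J - row j (skel s)).
  apply: hle; apply/cone_ofE.
  exists (\row_l ((l \in J)%:R : R) - delta_mx 0 j); split.
    move=> l; rewrite !mxE eqxx /=; case: (eqVneq l j) => [->|hne].
      by rewrite hj subrr.
    by rewrite subr0 ler0n.
  by rewrite mulmxBl -rowE.
have [|] := (hiff (row j (skel s))).2; last by [].
split; first by rewrite row_skel; exact: ray_cone.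
by move: hd; rewrite dotvBr ht; lra.
Qed.

End Fan.

Section PrincipalFace.
Variables (R : realFieldType) (n : nat) (S : ('I_n -> nat) -> Prop).
Variables (d : R) (tau : 'rV[R]_n -> Prop) (k : nat).
Hypothesis HS0 : ~ S (fun _ => 0%N).
Hypothesis Htau : principal_face S d tau.
Variables (x0 : 'rV[R]_n) (V : 'M[R]_(k, n)).
Hypotheses (Hx0 : tau x0) (HVf : row_free V) (HVr : forall i, tau (x0 + row i V))
  (HVs : forall x, tau x -> (x - x0 <= V)%MS).
Variables (a0 : 'rV[R]_n) (t0 : R).
Hypotheses (Ha0le : forall x, newton S x -> t0 <= dotv a0 x)
  (Ha0tau : forall x, tau x <-> (newton S x /\ dotv a0 x = t0)).

Implicit Types (a b x y : 'rV[R]_n).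
Local Notation p0 := (diag n d).

Definition principal b := forall x, newton S x -> dotv b p0 <= dotv b x.

Lemma dotv_p0 a : dotv a p0 = sumv a * d.
Proof. by rewrite /dotv /sumv mulr_suml; apply: eq_bigr => i _; rewrite mxE. Qed.

Lemma tau_newton x : tau x -> newton S x.
Proof. by case/Ha0tau. Qed.

Lemma p0_tau : tau p0.
Proof. by case: Htau => _ []. Qed.

Lemma dotv_a0p0 : dotv a0 p0 = t0.
Proof. by have [] := (Ha0tau p0).1 p0_tau. Qed.

Lemma principal_a0 : principal a0.
Proof. by move=> x hx; rewrite dotv_a0p0; exact: Ha0le. Qed.

(* p0 is not the origin, which is not in the Newton polyhedron. *)
Lemma d_neq0 : d != 0.
Proof.
apply/eqP => d0; apply: (newton0 HS0); have := tau_newton p0_tau.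
by congr newton; apply/matrixP => i j; rewrite !mxE d0.
Qed.

(* A principal vector is constant on tau: as p0 is in the relative
   interior of tau, p0 - s (x - p0) is in tau for x in tau and small s > 0,
   and <b,_> is minimal at p0 on both sides of it. *)
Lemma principal_const_tau b : principal b -> forall x, tau x -> dotv b x = dotv b p0.
Proof.
move=> hb x hx; case: Htau => _ [_ [e [e0 he]]].
have [s s0 hs] : exists2 s, 0 < s & s * l1 (x - p0) < e.
  have [s s0 hs] := small_mul e0 (l1_ge0 (x - p0)).
  by exists s => //; exact: hs s s0 (lexx _).
have hy : tau ((1 + s) *: p0 - s *: x).
  apply: he.
    exists 2%N, (fun j : 'I_2 => if val j == 0%N then 1 + s else - s),
      (fun j : 'I_2 => if val j == 0%N then p0 else x).
    split; first by rewrite big_ord_recl big_ord1 /=; ring.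
    split; first by move=> j; case: ifP => _; [exact: p0_tau|].
    by rewrite big_ord_recl big_ord1 /= scaleNr.
  move=> i; have -> : ((1 + s) *: p0 - s *: x) ord0 i - p0 ord0 i =
    - (s * (x - p0) ord0 i) by rewrite !mxE; ring.
  rewrite normrN normrM gtr0_norm //.
  exact: le_lt_trans (ler_wpM2l (ltW s0) (coord_le_l1 _ i)) hs.
have := hb _ (tau_newton hy); rewrite dotvBr !dotvZr => h1.
have h2 := hb _ (tau_newton hx).
apply/eqP; rewrite eq_le h2 andbT.
have : s * (dotv b x - dotv b p0) <= 0 by move: h1; rewrite mulrBr; lra.
by rewrite pmulr_rle0 // subr_le0.
Qed.

Lemma tau_sub x : tau x -> (x - p0 <= V)%MS.
Proof.
move=> hx; have -> : x - p0 = (x - x0) - (p0 - x0) by rewrite opprB addrA subrK.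
by apply: addmx_sub; [exact: HVs | rewrite eqmx_opp; exact: HVs p0_tau].
Qed.

Lemma principal_perp b : principal b -> forall v, (v <= V)%MS -> dotv b v = 0.
Proof.
move=> hb v /submxP [c ->].
rewrite mulmx_sum_row dotv_sumr big1 // => i _.
have := principal_const_tau hb (HVr i).
rewrite dotvDr (principal_const_tau hb Hx0) dotvZr => h.
suff -> : dotv b (row i V) = 0 by rewrite mulr0.
by move: h; lra.
Qed.

(* At most n - k principal vectors are linearly independent: their span
   meets rowspace V trivially, since a vector in both is self-orthogonal. *)
Lemma principal_rank_bound m (P : 'M[R]_(m, n)) : row_free P ->
  (forall i, principal (row i P)) -> (m <= n - k)%N.
Proof.
move=> hPf hPN.
have hcap x : (x <= P)%MS -> (x <= V)%MS -> x = 0.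
  move=> /submxP [c hc] hxV; apply: dotv_self_eq0.
  rewrite {1}hc mulmx_sum_row dotv_suml big1 // => i _.
  by rewrite dotvZl (principal_perp (hPN i) hxV) mulr0.
have h0 : (P :&: V)%MS = 0.
  apply/row_matrixP => i; rewrite row0; apply: hcap.
    exact: submx_trans (row_sub _ _) (capmxSl _ _).
  exact: submx_trans (row_sub _ _) (capmxSr _ _).
have := mxrank_sum_cap P V; rewrite h0 mxrank0 addn0 (eqnP hPf) (eqnP HVf).
by have := rank_leq_col (P + V)%MS; lia.
Qed.

Lemma delta_nonneg i (c : R) : 0 <= c -> nonneg (c *: (delta_mx ord0 i : 'rV[R]_n)).
Proof. by move=> c0 j; rewrite !mxE mulr_ge0 // ler0n. Qed.

(* a0 is nonnegative: moving p0 along e_i stays in the Newton polyhedron. *)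
Lemma a0_nonneg : nonneg a0.
Proof.
move=> i; rewrite leNgt; apply/negP => hi.
have c0 : 0 < (- a0 ord0 i)^-1 by rewrite invr_gt0 oppr_gt0.
have hx := newton_up (tau_newton p0_tau) (delta_nonneg i (ltW c0)).
have := Ha0le hx; rewrite dotvDr dotvZr dotv_delta dotv_a0p0.
by rewrite invrN mulNr mulVf ?ltr0_neq0 //; lra.
Qed.

Lemma a0_zero_dir (i : 'I_n) : a0 ord0 i = 0 -> ((delta_mx ord0 i : 'rV[R]_n) <= V)%MS.
Proof.
move=> h.
have hx := newton_up (tau_newton p0_tau) (delta_nonneg i (@ler01 R)).
have ht : tau (p0 + 1 *: delta_mx ord0 i).
  by apply/Ha0tau; split=> //; rewrite dotvDr dotvZr dotv_delta h mulr0 addr0 dotv_a0p0.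
by have := tau_sub ht; rewrite addrC addKr scale1r.
Qed.

Lemma inA_principal (a : 'rV[int]_n) : inA S d a -> principal (intpt R a).
Proof.
case=> t [[_ hmin] [tn0 h]] x hx.
suff -> : dotv (intpt R a) p0 = t by exact: hmin.
move: h; rewrite dotv_p0 mulNr => /oppr_inj h.
have := congr1 (fun z => z * t * d) h; rewrite /= mulfVK // => ->.
by rewrite mul1r mulrAC mulVf ?mul1r // d_neq0.
Qed.

Lemma principal_inA (a : 'rV[int]_n) : nonneg (intpt R a) -> intpt R a != 0 ->
  principal (intpt R a) -> inA S d a.
Proof.
move=> hnn hnz hN.
have hs : sumv (intpt R a) != 0.
  apply: contra hnz => /eqP /psumr_eq0P h; apply/eqP/matrixP => i j.
  by rewrite (ord1 i) [RHS]mxE h // => l _; exact: hnn.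
exists (sumv (intpt R a) * d); split.
  split; first by exists p0; split; [exact: tau_newton p0_tau | exact: dotv_p0].
  by move=> x hx; rewrite -dotv_p0; exact: hN.
split; first by rewrite mulf_neq0 // d_neq0.
by rewrite mulNr invfM mulrA divff // mul1r div1r.
Qed.

Variable Sig : seq (seq 'rV[int]_n).
Hypothesis HSig : simplicial_subdivision R S Sig.
Implicit Types (s : seq 'rV[int]_n).
Local Notation skel := (skel R).

Definition principal_rays s : {set 'I_(size s)} :=
  [set j | classicb (principal (row j (skel s)))].

Definition principal_mx s : 'M[R]_(#|principal_rays s|, n) :=
  rowsub (fun i => enum_val i) (skel s).

Lemma principal_mx_row s i : principal (row i (principal_mx s)).
Proof. by rewrite row_rowsub; have := enum_valP i; rewrite inE => /classicbP. Qed.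

(* A principal vector b of a cone s lies in the span of its principal
   rays: all rays are minimised at a common vertex g, so from
   <b,p0> <= <b,g> every ray with a positive coefficient in b is
   minimised at p0 as well. *)
Lemma principal_in_span s b : s \in Sig -> cone_of s b -> principal b ->
  (b <= principal_mx s)%MS.
Proof.
move=> hs /cone_ofE [c [hc hbe]] hN; have [g [gN hg]] := common_vertex HSig hs.
set gap := fun j => dotv (row j (skel s)) p0 - dotv (row j (skel s)) g.
have gap_ge0 j : 0 <= gap j.
  rewrite subr_ge0; apply: hg; last exact: tau_newton p0_tau.
  by rewrite row_skel; exact: ray_cone.
have hsum : \sum_j c ord0 j * gap j <= 0.
  have := hN g gN; rewrite hbe mulmx_sum_row !dotv_suml -subr_ge0 -sumrB => h.
  rewrite -oppr_ge0 -sumrN; apply: le_trans h _; apply: ler_sum => j _.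
  by rewrite !dotvZl mulrBr opprB.
have hz j : c ord0 j * gap j = 0.
  apply/eqP; rewrite eq_le mulr_ge0 // andbT; apply: le_trans hsum.
  by rewrite (bigD1 j) //= lerDl; apply: sumr_ge0 => l _; exact: mulr_ge0.
rewrite hbe mulmx_sum_row; apply: summx_sub => j _.
have [c0|cn0] := eqVneq (c ord0 j) 0; first by rewrite c0 scale0r sub0mx.
apply: scalemx_sub.
have hj : j \in principal_rays s.
  rewrite inE; apply/classicbP => x hx.
  move/eqP: (hz j); rewrite mulf_eq0 (negbTE cn0) subr_eq0 => /eqP ->.
  by apply: hg => //; rewrite row_skel; exact: ray_cone.
by rewrite -(enum_rankK_in hj hj) -row_rowsub; exact: row_sub.
Qed.

Lemma cardA_le s m : s \in Sig -> cardA S d s m -> (m <= n - k)%N.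
Proof.
move=> hs [A [hA <-]].
apply: (@principal_rank_bound _ (rowsub (fun i => enum_val i) (skel s))).
  by apply: rowsub_free (skel_free HSig hs); exact: enum_val_inj.
move=> i; rewrite row_rowsub row_skel; apply: inA_principal; apply/hA.
exact: enum_valP.
Qed.

Lemma cardA_principal_rays s : s \in Sig -> cardA S d s #|principal_rays s|.
Proof.
move=> hs; exists (principal_rays s); split=> // j; rewrite inE; split.
  move/classicbP; rewrite row_skel => hN; apply: principal_inA => //.
    exact: (cone_nonneg HSig hs (ray_cone R j)).
  by have := ray_neq0 HSig j hs.
by move/inA_principal => h; apply/classicbP; rewrite row_skel.
Qed.

Definition perpV (w : 'rV[R]_n) := w *m V^T = 0.

Lemma perpV_dot w v : perpV w -> (v <= V)%MS -> dotv w v = 0.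
Proof.
move=> hw /submxP [c ->]; rewrite dotvE trmx_mul mulmxA.
by rewrite [w *m _]hw mul0mx mxE.
Qed.

(* Small perturbations of a0 orthogonal to V stay nonnegative: the
   coordinates where a0 vanishes are directions of tau. *)
Lemma a0_perturb_nonneg : exists2 e, 0 < e &
  forall w, perpV w -> near_pt e 0 w -> nonneg (a0 + w).
Proof.
have := @uniform_threshold R _ (enum 'I_n)
  (fun i e => 0 < a0 ord0 i -> e <= a0 ord0 i).
case=> [i _|e e0 he].
  have [h|h] := ltP 0 (a0 ord0 i); first by exists (a0 ord0 i) => // e' _ he' _.
  by exists 1 => // e' _ _ h'; move: h h'; rewrite leNgt => /negP.
exists e => // w hw hnear i; rewrite mxE.
have := a0_nonneg i; rewrite le_eqVlt => /orP [/eqP h0|hpos].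
  have := perpV_dot hw (a0_zero_dir (esym h0)); rewrite dotv_delta => ->.
  by rewrite -h0 addr0.
have := he i (mem_enum _ _) e e0 (lexx _) hpos.
by have := hnear i; rewrite mxE subr0 ltr_norml; lra.
Qed.

Lemma vertex_margin : exists2 e, 0 < e & forall s, s \in Sig -> exists g,
  [/\ newton S g, forall b, cone_of s b -> forall x, newton S x -> dotv b g <= dotv b x
    & tau g \/ e * l1 (g - p0) < dotv a0 g - t0].
Proof.
have := @uniform_threshold R _ Sig (fun s e => exists g,
  [/\ newton S g, forall b, cone_of s b -> forall x, newton S x -> dotv b g <= dotv b x
    & tau g \/ e * l1 (g - p0) < dotv a0 g - t0]).
case=> [s hs|e e0 he]; last by exists e => // s hs; exact: he s hs e e0 (lexx _).
have [g [gN hg]] := common_vertex HSig hs.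
have [hgt|hgt] := eqVneq (dotv a0 g) t0.
  by exists 1 => // e' _ _; exists g; split=> //; left; apply/Ha0tau.
have hlt : 0 < dotv a0 g - t0 by rewrite subr_gt0 lt_neqAle eq_sym hgt Ha0le.
have [e e0 he] := small_mul hlt (l1_ge0 (g - p0)).
by exists e => // e' e'0 he'; exists g; split=> //; right; exact: he.
Qed.

(* Small perturbations of a0 orthogonal to V are nonnegative and principal:
   such a perturbation b lies in a cone of Sigma, so it is minimised at the
   common vertex g of that cone, and <b,g> >= <b,p0> by the margin. *)
Lemma perturb_principal : exists2 eta, 0 < eta & forall w, perpV w ->
  near_pt eta 0 w -> nonneg (a0 + w) /\ principal (a0 + w).
Proof.
have [e1 e10 he1] := a0_perturb_nonneg; have [e2 e20 he2] := vertex_margin.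
exists (Num.min e1 e2); first by rewrite lt_min e10 e20.
move=> w hw hnear.
have hnn : nonneg (a0 + w) by apply: he1 => //; apply: near_mono hnear; rewrite ge_min lexx.
split=> // x hx.
case: HSig => _ [hcov _]; have [s hs hb] := (hcov _).1 hnn.
have [g [gN hg hor]] := he2 s hs; apply: le_trans (hg _ hb _ hx).
have h0 := dotv_a0p0; rewrite !dotvDl.
case: hor => [htg|hlt].
  have [_ hag] := (Ha0tau g).1 htg.
  by have := perpV_dot hw (tau_sub htg); rewrite dotvBr; lra.
have hw2 : near_pt e2 0 w by apply: near_mono hnear; rewrite ge_min lexx orbT.
have := dotv_near (g - p0) (ltW e20) hw2; rewrite dotv0l subr0 ler_norml.
by move: hlt; rewrite dotvBr; move: (e2 * l1 (g - p0)) => E; lra.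
Qed.

(* Parametrise the orthogonal complement L of V by
   coordinates lam -> lam W; a generic point a0 + w of L near a0 is
   principal and lies in some cone s, hence in the span of the principal
   rays of s; genericity means this span contains all of L. *)
Lemma principal_span_cone : exists2 s, s \in Sig & (n - k <= \rank (principal_mx s))%N.
Proof.
set L := kermx V^T; set W := row_base L.
have hrkL : \rank L = (n - k)%N by rewrite mxrank_ker mxrank_tr (eqnP HVf).
have hWperp w : (w <= W)%MS -> perpV w.
  by move=> hw; apply/sub_kermxP; apply: submx_trans hw _; rewrite eq_row_base.
have [l0 hl0] : exists l0, l0 *m W = a0.
  exists (a0 *m pinvmx W); apply: mulmxKpV; rewrite eq_row_base.
  apply/sub_kermxP/rowP => j; rewrite mulmx_dotv tr_col trmxK mxE.
  exact: principal_perp principal_a0 _ (row_sub _ _).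
have [eta eta0 heta] := perturb_principal.
have [rho rho0 hrho] := mulmx_near W eta0.
set Kf := fun s => kermx (W *m cokermx (principal_mx s)).
have := @avoid R _ [seq Kf s | s <- Sig & (\rank (Kf s) < \rank L)%N] l0 rho rho0.
case=> [K /mapP [s]|lam [hlam hav]]; first by rewrite mem_filter => /andP [hr _] ->.
set w := (lam - l0) *m W.
have hb : lam *m W = a0 + w by rewrite /w mulmxBl hl0 addrC subrK.
have [hnn hN] : nonneg (a0 + w) /\ principal (a0 + w).
  apply: heta; first by apply: hWperp; exact: submxMl.
  by apply: hrho => j; rewrite !mxE subr0; exact: hlam j.
rewrite -hb in hnn hN.
case: HSig => _ [hcov _]; have [s hs hsb] := (hcov _).1 hnn.
have hlK : (lam <= Kf s)%MS.
  apply/sub_kermxP; rewrite mulmxA; apply/eqP; rewrite -submxE.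
  exact: principal_in_span hs hsb hN.
have hfull : \rank (Kf s) = \rank L.
  apply/eqP; rewrite eqn_leq rank_leq_col /= leqNgt; apply/negP => hr.
  have hin : Kf s \in [seq Kf s | s <- Sig & (\rank (Kf s) < \rank L)%N].
    by apply/mapP; exists s => //; rewrite mem_filter hr hs.
  by have := hav _ hin; rewrite hlK.
have h1 : (1%:M <= Kf s)%MS by rewrite submx_full // /row_full hfull.
have hWN : (W <= principal_mx s)%MS.
  by rewrite submxE; move/sub_kermxP: h1; rewrite mul1mx => ->.
exists s => //; rewrite -hrkL -(eqnP (row_base_free L)); exact: mxrankS.
Qed.

(* Some n-dimensional cone has exactly n - k principal rays: an
   n-dimensional cone containing the sum of the principal rays of the cone
   above contains each of them, hence their span. *)
Lemma top_cone_principal :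
  exists s, [/\ s \in Sig, \rank (skel s) = n & #|principal_rays s| = (n - k)%N].
Proof.
have [s hs hr] := principal_span_cone.
have [s' [hs' hr' hc]] :=
  top_cover HSig (cone_nonneg HSig hs (ray_sum_cone R (principal_rays s))).
have hsub : (principal_mx s <= principal_mx s')%MS.
  apply/row_subP => i; apply: principal_in_span => //; last exact: principal_mx_row.
  by rewrite row_rowsub; have := face_rays HSig hs hs' hc (enum_valP i).
exists s'; split=> //; apply/eqP; rewrite eqn_leq.
rewrite (cardA_le hs' (cardA_principal_rays hs')) /=.
exact: leq_trans hr (leq_trans (mxrankS hsub) (rank_leq_row _)).
Qed.

Lemma max_cardA_codim : is_max_cardA S d Sig (n - k).
Proof.
split; last by move=> s m [hs _]; exact: cardA_le.
have [s [hs hr hc]] := top_cone_principal.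
exists s; split; first by split=> //; exact: full_rank_cone_dim.
by rewrite -hc; exact: cardA_principal_rays.
Qed.

End PrincipalFace.

Unset Implicit Arguments.

Theorem lemma9p3 (R : realFieldType) (n : nat)
  (S : ('I_n -> nat) -> Prop)
  (HSne : exists alpha, S alpha)
  (HS0 : ~ S (fun _ => 0%N))
  (Sig : seq (seq 'rV[int]_n))
  (HSig : simplicial_subdivision R S Sig)
  (d : R) (Hd : is_dnum S d)
  (tau : 'rV[R]_n -> Prop) (Htau : principal_face S d tau)
  (k : nat) (Hk : aff_dim tau k) :
  is_max_cardA S d Sig (n - k)%N.
Proof.
have [[_ [a0 [t0 [Ha0le Ha0tau]]]] _] := Htau.
have [x0 [Hx0 [V [HVf [HVr HVs]]]]] := Hk.
exact: (max_cardA_codim HS0 Htau Hx0 HVf HVr HVs Ha0le Ha0tau HSig).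
Qed.
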